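(* Let $k\ge3$, $2\le s\le k$, $\mathbf n=(n_1,\dots,n_k)$, $r\le\min\{n_1,\dots,n_s\}$. If $\mathcal A\in P_s(\mathbf n,r)$ has a decomposition $\mathcal A=\sum_{i=1}^r\sigma_i\mathbf a^{(1)}_i\otimes\cdots\otimes\mathbf a^{(k)}_i$ with all $\mathbf a^{(l)}_i$ unit vectors and $\mathbf a^{(l)}_1,\dots,\mathbf a^{(l)}_r$ pairwise orthogonal for each $l\le s$, then $\operatorname{rank}(\mathcal A)=\#\{i:\sigma_i\ne0\}$, and a partially orthogonal rank decomposition of $\mathcal A$ is a rank decomposition.
   Context: $P_s(\mathbf n,r)$ is the set of tensors admitting a decomposition as in the claim. The (CP) rank of a tensor is the least number of rank-one tensors summing to it; a rank decomposition is one with that many terms. A partially orthogonal rank decomposition of $\mathcal A$ is a decomposition of the form in the claim (unit factors, orthonormal factors in the first $s$ modes) with the smallest possible number of terms. *)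

From HB Require Import structures.
From mathcomp Require Import all_boot all_order all_algebra.
From mathcomp Require Import reals.
Set Implicit Arguments. Unset Strict Implicit. Unset Printing Implicit Defensive.
Import Order.TTheory GRing.Theory Num.Theory.
Local Open Scope ring_scope.

Section Tensors.
Variables (R : realType) (k : nat) (n : 'I_k -> nat).

Definition tindex := forall l : 'I_k, 'I_(n l).

Definition tensor := tindex -> R.

Definition factors := forall l : 'I_k, 'I_(n l) -> R.

Definition outer (a : factors) : tensor :=
  fun idx => \prod_(l < k) a l (idx l).

Definition dotv (m : nat) (u v : 'I_m -> R) : R := \sum_(j < m) u j * v j.

Definition unitv (m : nat) (u : 'I_m -> R) : Prop := dotv u u = 1.

Definition has_cp_decomp (A : tensor) (r : nat) : Prop :=
  exists a : 'I_r -> factors, A = (fun idx => \sum_(i < r) outer (a i) idx).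

Definition is_tensor_rank (A : tensor) (m : nat) : Prop :=
  has_cp_decomp A m /\ forall r, has_cp_decomp A r -> (m <= r)%N.

Definition is_po_decomp (s : nat) (A : tensor) (r : nat)
    (sigma : 'I_r -> R) (a : 'I_r -> factors) : Prop :=
  [/\ (forall i l, unitv (a i l)),
      (forall l : 'I_k, (l < s)%N -> forall i j : 'I_r, i != j ->
          dotv (a i l) (a j l) = 0) &
      A = (fun idx => \sum_(i < r) sigma i * outer (a i) idx)].

Definition in_Ps (s : nat) (r : nat) (A : tensor) : Prop :=
  exists sigma a, @is_po_decomp s A r sigma a.

Definition is_po_rank (s : nat) (A : tensor) (m : nat) : Prop :=
  in_Ps s m A /\ forall r, in_Ps s r A -> (m <= r)%N.

End Tensors.

From mathcomp Require Import all_boot all_order all_algebra.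
From mathcomp Require Import reals.
From mathcomp Require Import ring boolp.
Import Order.TTheory GRing.Theory Num.Theory.
Local Open Scope ring_scope.

(* Drop the terms with sigma_i = 0 and pick two orthonormal modes l0, l1.
   Contract A with a_i^(l0) in mode l0 and with a_j^(l1) in mode l1, and
   evaluate the other indices at a point e_j where the remaining factors of
   the j-th term do not vanish.  By orthonormality this r x r array is
   diagonal with nonzero diagonal.  Computed from any CP decomposition with
   m terms, the same array is a product of an r x m and an m x r matrix,
   so m >= r.  A minimal partially orthogonal decomposition has no zero
   coefficient, so its length is the rank as well. *)

Section Contraction.
Context {R : realType} {k : nat} {n : 'I_k -> nat}.
Variables (l0 l1 : 'I_k).
Hypothesis l01 : l0 != l1.

Definition rest_prod (b : factors R n) (e : tindex n) : R :=
  \prod_(l | (l != l0) && (l != l1)) b l (e l).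

Definition contract (T : tensor R n) (u : 'I_(n l0) -> R)
    (v : 'I_(n l1) -> R) (e : tindex n) : R :=
  \sum_(x0 < n l0) \sum_(x1 < n l1) u x0 * v x1 * T (dfwith (dfwith e x0) x1).

Lemma outer_dfwith2 b e x0 x1 :
  outer b (dfwith (dfwith e x0) x1) = b l0 x0 * b l1 x1 * rest_prod b e.
Proof.
have l10 : l1 != l0 by rewrite eq_sym.
rewrite /outer (bigD1 l0) //= (bigD1 l1) //= dfwith_in dfwith_out // dfwith_in.
rewrite mulrA; congr (_ * _); apply: eq_bigr => l /andP[nl1 nl0].
by rewrite !dfwith_out // eq_sym.
Qed.

Lemma contract_outer b u v e :
  contract (outer b) u v e = dotv u (b l0) * dotv v (b l1) * rest_prod b e.
Proof.
rewrite /contract /dotv -mulrA mulr_suml; apply: eq_bigr => x0 _.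
rewrite mulr_suml mulr_sumr; apply: eq_bigr => x1 _.
rewrite outer_dfwith2; ring.
Qed.

Lemma contract_sum r (F : 'I_r -> tensor R n) u v e :
  contract (fun idx => \sum_(i < r) F i idx) u v e =
  \sum_(i < r) contract (F i) u v e.
Proof.
rewrite /contract.
under eq_bigr => x0 _ do under eq_bigr => x1 _ do rewrite mulr_sumr.
under eq_bigr => x0 _ do rewrite exchange_big /=.
by rewrite exchange_big.
Qed.

Lemma contractZ c (T : tensor R n) u v e :
  contract (fun idx => c * T idx) u v e = c * contract T u v e.
Proof.
rewrite /contract mulr_sumr; apply: eq_bigr => x0 _.
rewrite mulr_sumr; apply: eq_bigr => x1 _; ring.
Qed.

End Contraction.

Section LowerBound.
Context {R : realType} {k : nat} {n : 'I_k -> nat}.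

Lemma unitv_neq0 {m} {u : 'I_m -> R} : unitv u -> exists x, u x != 0.
Proof.
move=> u1; have [x ux|u0] := pickP (fun x => u x != 0); first by exists x.
move: u1; rewrite /unitv /dotv big1 => [/esym/eqP|x _].
  by rewrite oner_eq0.
by move/negbFE/eqP: (u0 x) ->; rewrite mul0r.
Qed.

Lemma rest_prod_neq0 (b : factors R n) l0 l1 :
  (forall l, unitv (b l)) -> exists e, rest_prod l0 l1 b e != 0.
Proof.
move=> b1; exists (fun l => xchoose (unitv_neq0 (b1 l))).
by apply/prodf_neq0 => l _; exact: (xchooseP (unitv_neq0 (b1 l))).
Qed.

Context {l0 l1 : 'I_k} {r : nat} {sigma : 'I_r -> R} {a : 'I_r -> factors R n}.
Hypotheses (l01 : l0 != l1) (a1 : forall i l, unitv (a i l)).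
Hypotheses (orth0 : forall i j, dotv (a i l0) (a j l0) = (i == j)%:R)
           (orth1 : forall i j, dotv (a i l1) (a j l1) = (i == j)%:R).

Lemma contract_po_decomp {A} i j e :
  A = (fun idx => \sum_(q < r) sigma q * outer (a q) idx) ->
  contract l0 l1 A (a i l0) (a j l1) e =
  (i == j)%:R * (sigma i * rest_prod l0 l1 (a i) e).
Proof.
move=> ->; rewrite contract_sum.
under eq_bigr => q _ do rewrite contractZ contract_outer // orth0 orth1.
rewrite (bigD1 i) //= big1 => [|q /negbTE]; last first.
  by rewrite eq_sym => ->; rewrite !(mulr0n, mul0r, mulr0).
rewrite eqxx addr0 [j == i]eq_sym.
by case: (i == j); rewrite ?(mulr1n, mulr0n); ring.
Qed.

Lemma has_cp_decomp_ge {A m} :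
  (forall i, sigma i != 0) ->
  A = (fun idx => \sum_(i < r) sigma i * outer (a i) idx) ->
  has_cp_decomp A m -> (r <= m)%N.
Proof.
move=> sigma_neq0 defA [b defAb].
have /all_sig[e rest_neq0] : forall j, {e | rest_prod l0 l1 (a j) e != 0}.
  by move=> j; apply/sigW/rest_prod_neq0.
pose X := \matrix_(i < r, p < m) dotv (a i l0) (b p l0).
pose Z := \matrix_(p < m, j < r)
  (dotv (a j l1) (b p l1) * rest_prod l0 l1 (b p) (e j)).
pose D := diag_mx (\row_i (sigma i * rest_prod l0 l1 (a i) (e i))).
have XZ : X *m Z = D.
  apply/matrixP => i j; rewrite !mxE.
  transitivity (contract l0 l1 A (a i l0) (a j l1) (e j)).
    rewrite defAb contract_sum; apply: eq_bigr => p _.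
    by rewrite contract_outer // !mxE mulrA.
  by rewrite (contract_po_decomp _ _ _ defA) mulr_natl; case: eqP => [->|].
have D_unit : D \in unitmx.
  rewrite unitmxE det_diag unitfE; apply/prodf_neq0 => i _.
  by rewrite mxE mulf_neq0.
by apply: (@mulmx1_min _ _ _ X (Z *m invmx D)); rewrite mulmxA XZ mulmxV.
Qed.

End LowerBound.

Section Rank.
Context {R : realType} {k : nat} {n : 'I_k -> nat}.

Lemma has_cp_decomp_weighted (l0 : 'I_k) {A : tensor R n} {r}
    {sigma : 'I_r -> R} {a : 'I_r -> factors R n} :
  A = (fun idx => \sum_(i < r) sigma i * outer (a i) idx) -> has_cp_decomp A r.
Proof.
move=> ->; exists (fun i l x => (if l == l0 then sigma i else 1) * a i l x).
apply: funext => idx; apply: eq_bigr => i _.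
rewrite /outer big_split /=; congr (_ * _).
by rewrite (bigD1 l0) //= eqxx big1 ?mulr1 // => l /negbTE ->.
Qed.

Lemma po_decomp_orthonormal {s} {A : tensor R n} {r sigma a} (l : 'I_k) :
  @is_po_decomp R k n s A r sigma a -> (l < s)%N ->
  forall i j, dotv (a i l) (a j l) = (i == j)%:R.
Proof.
case=> a1 orth _ ls i j; case: eqP => [->|/eqP ij]; first exact: a1.
exact: orth.
Qed.

Definition support {r} (sigma : 'I_r -> R) := [set i | sigma i != 0].

Lemma po_decomp_support {s} {A : tensor R n} {r sigma a} :
  @is_po_decomp R k n s A r sigma a ->
  is_po_decomp s A (fun q : 'I_#|support sigma| => sigma (enum_val q))
    (fun q => a (enum_val q)).
Proof.
case=> a1 orth defA; split => [i l|l ls i j ij|]; first exact: a1.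
  by apply: orth => //; apply: contra ij => /eqP/enum_val_inj ->.
rewrite defA; apply: funext => idx.
rewrite (bigID [in support sigma]) /= [X in _ + X]big1 ?addr0.
  by rewrite big_enum_val.
by move=> i; rewrite inE => /negbNE/eqP ->; rewrite mul0r.
Qed.

Lemma po_decomp_rank {s} {A : tensor R n} {r sigma a} :
  (2 <= k)%N -> (2 <= s)%N -> @is_po_decomp R k n s A r sigma a ->
  is_tensor_rank A #|support sigma|.
Proof.
move=> k2 s2 /po_decomp_support poA; have [a1 _ defA] := poA.
pose l0 : 'I_k := Ordinal (ltnW k2); pose l1 : 'I_k := Ordinal k2.
split=> [|m]; first exact: (has_cp_decomp_weighted l0 defA).
apply: (has_cp_decomp_ge (l0 := l0) (l1 := l1) _ a1 _ _ _ defA) => //.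
- exact: po_decomp_orthonormal l0 poA (ltnW s2).
- exact: po_decomp_orthonormal l1 poA s2.
- by move=> q; have := enum_valP q; rewrite inE.
Qed.

End Rank.

Theorem proposition3p3 (R : realType) (k : nat) (n : 'I_k -> nat)
    (s r : nat) (A : tensor R n) (sigma : 'I_r -> R) (a : 'I_r -> factors R n) :
  (3 <= k)%N -> (2 <= s)%N -> (s <= k)%N ->
  (forall l : 'I_k, (l < s)%N -> (r <= n l)%N) ->
  is_po_decomp s A sigma a ->
  is_tensor_rank A #|[set i : 'I_r | sigma i != 0]| /\
  (forall m : nat, is_po_rank s A m -> is_tensor_rank A m).
Proof.
(* s <= k and r <= n_l are unused; the latter follows from orthonormality. *)
move=> k3 s2 _ _ poA; have k2 : (2 <= k)%N := ltnW k3.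
split=> [|m [[sigma' [a' poA']] m_min]]; first exact: po_decomp_rank k2 s2 poA.
have rankA := po_decomp_rank k2 s2 poA'; have [_ rank_min] := rankA.
suff -> : m = #|support sigma'| by [].
have [_ _ defA] := poA'.
apply/eqP; rewrite eqn_leq m_min ?rank_min //.
- exact: (has_cp_decomp_weighted (Ordinal (ltnW k2)) defA).
- by do 2 eexists; exact: po_decomp_support poA'.
Qed.
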